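(* Let $Y\in[M]=\{1,\dots,M\}$, $R\in\{0,1\}$, and $F$ taking values in a finite set $\mathcal F$, with $\mathbb{P}(F=f,R=1)>0$ for all $f\in\mathcal F$. Define $B\in\mathbb{R}^{|\mathcal F|\times M}$ by $B_{fy}=\mathbb{P}(Y=y\mid F=f,R=1)$ and $H\in\mathbb{R}^{|\mathcal F|\times M}$ by $H_{fy}=\mathbb{P}(F=f,Y=y)$. Say that completeness holds if for every function $h:[M]\to\mathbb{R}$, $\mathbb{E}[h(Y)\mid F=f,R=1]=0$ for all $f\in\mathcal F$ implies $h(y)=0$ for all $y\in[M]$. Then: (i) completeness holds if and only if $\operatorname{rank}(B)=M$. (ii) Suppose in addition that $F$ is conditionally independent of $R$ given $Y$, that $\pi(y):=\mathbb{P}(R=1\mid Y=y)\in[\underline\pi,\overline\pi]$ for all $y$, and that $\mathbb{P}(F=f,R=1)\in[\underline p_F,\overline p_F]$ for all $f$, where $\underline\pi>0$ and $\underline p_F>0$. Then completeness holds if and only if $\operatorname{rank}(H)=M$, and in that case \[\kappa(B)\le \frac{\overline p_F}{\underline p_F}\cdot\frac{\overline\pi}{\underline\pi}\cdot\kappa(H),\] where for a matrix $G$ with full column rank, $\kappa(G)=\sigma_{\max}(G)/\sigma_{\min}(G)$ is the ratio of its largest to its smallest singular value.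
   Context: Here $F$ plays the role of an always-observed auxiliary prediction of the outcome $Y$ (a shadow variable), and the covariate $X$ is suppressed (equivalently, everything is conditional on a fixed value of $X$). *)

From HB Require Import structures.
From mathcomp Require Import all_boot all_order all_algebra.
From mathcomp Require Import classical_sets reals.
Set Implicit Arguments. Unset Strict Implicit. Unset Printing Implicit Defensive.
Import Order.TTheory GRing.Theory Num.Theory.
Local Open Scope ring_scope.

Section Defs.
Variables (R : realType) (n M : nat).
(* F takes values in 'I_n (the finite set \mathcal F, |F| = n), Y in 'I_M
   (i.e. [M]), R in bool (true = 1).  p f y r = P(F=f, Y=y, R=r). *)
Variable p : 'I_n -> 'I_M -> bool -> R.

Definition is_pmf := (forall f y r, 0 <= p f y r) /\
  \sum_(f < n) \sum_(y < M) \sum_(r : bool) p f y r = 1.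

Definition pFR1 (f : 'I_n) : R := \sum_(y < M) p f y true.
Definition pY (y : 'I_M) : R := \sum_(f < n) \sum_(r : bool) p f y r.
Definition pYR (y : 'I_M) (r : bool) : R := \sum_(f < n) p f y r.
Definition pFY (f : 'I_n) (y : 'I_M) : R := \sum_(r : bool) p f y r.

Definition piR (y : 'I_M) : R := pYR y true / pY y.

Definition Bmat : 'M[R]_(n, M) := \matrix_(f < n, y < M) (p f y true / pFR1 f).
Definition Hmat : 'M[R]_(n, M) := \matrix_(f < n, y < M) pFY f y.

Definition condE (h : 'I_M -> R) (f : 'I_n) : R :=
  \sum_(y < M) h y * (p f y true / pFR1 f).

Definition completeness : Prop :=
  forall h : 'I_M -> R, (forall f, condE h f = 0) -> forall y, h y = 0.

Definition cond_indep_F_R_given_Y : Prop :=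
  forall f y r, p f y r * pY y = pFY f y * pYR y r.
End Defs.

Definition sigma_max (R : realType) m k (G : 'M[R]_(m, k)) : R :=
  Num.sqrt (sup [set a : R | eigenvalue (G^T *m G) a]).
Definition sigma_min (R : realType) m k (G : 'M[R]_(m, k)) : R :=
  Num.sqrt (inf [set a : R | eigenvalue (G^T *m G) a]).
Definition cond_number (R : realType) m k (G : 'M[R]_(m, k)) : R :=
  sigma_max G / sigma_min G.

From HB Require Import structures.
From mathcomp Require Import all_boot all_order all_algebra.
From mathcomp Require Import classical_sets reals.
From mathcomp Require Import ring lra.
Import Order.TTheory GRing.Theory Num.Theory.
Set Implicit Arguments. Unset Strict Implicit. Unset Printing Implicit Defensive.
Local Open Scope classical_set_scope.
Local Open Scope ring_scope.

(* Completeness says that the columns of B are linearly independent, whence (i).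
   Under conditional independence B = D_F^-1 H D_pi, where D_F = diag P(F=f, R=1) and
   D_pi = diag pi(y) are positive diagonal matrices.  Such scalings preserve the rank, and
   they change every Rayleigh quotient |v G^T|^2 / |v|^2 of G^T G by a factor lying between
   the squares of the products of the extreme diagonal entries, which bounds sigma_max(B)
   and sigma_min(B) in terms of those of H.  Since the singular values are defined through
   the eigenvalues of G^T G, one needs that the extreme Rayleigh quotients are eigenvalues:
   a positive semidefinite T whose Rayleigh quotients approach 0 is singular, because an
   invertible T satisfies |w|^2 <= C |w T|^2 <= C' (w T w^T). *)

Section QuadraticForms.
Variable R : realFieldType.
Implicit Types (k l : nat).

Definition sqnorm k (x : 'rV[R]_k) : R := (x *m x^T) 0 0.
Definition qform k (T : 'M[R]_k) (w : 'rV[R]_k) : R := (w *m T *m w^T) 0 0.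

Lemma sqnormE k (x : 'rV[R]_k) : sqnorm x = \sum_i x 0 i ^+ 2.
Proof. by rewrite /sqnorm mxE; apply: eq_bigr => i _; rewrite mxE expr2. Qed.

Lemma sqnorm_ge0 k (x : 'rV[R]_k) : 0 <= sqnorm x.
Proof. by rewrite sqnormE sumr_ge0 // => i _; rewrite sqr_ge0. Qed.

Lemma sqnorm_gt0 k (x : 'rV[R]_k) : x != 0 -> 0 < sqnorm x.
Proof.
move=> nz; rewrite lt_def sqnorm_ge0 andbT; apply: contra nz.
rewrite sqnormE psumr_eq0 => [/allP x0|i _]; last by rewrite sqr_ge0.
apply/eqP/rowP => i; rewrite mxE; apply/eqP; rewrite -sqrf_eq0.
by apply: (implyP (x0 i _)) => //; rewrite mem_index_enum.
Qed.

Lemma mulmx_tr_le k (x y : 'rV[R]_k) : (x *m y^T) 0 0 <= (sqnorm x + sqnorm y) / 2.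
Proof.
rewrite mxE !sqnormE -big_split /= mulr_suml; apply: ler_sum => i _.
rewrite mxE; set a := x 0 i; set b := y 0 i.
have : 0 <= (a - b) ^+ 2 by rewrite sqr_ge0.
nra.
Qed.

Lemma sqr_sum_le k (x : 'I_k -> R) : (\sum_i x i) ^+ 2 <= k%:R * \sum_i x i ^+ 2.
Proof.
have -> : k%:R * \sum_i x i ^+ 2 = \sum_i \sum_j (x i ^+ 2 + x j ^+ 2) / 2.
  rewrite [RHS](eq_bigr (fun i => (x i ^+ 2 *+ k + \sum_j x j ^+ 2) / 2)); last first.
    by move=> i _; rewrite -mulr_suml big_split /= sumr_const card_ord.
  rewrite -mulr_suml big_split /= sumr_const card_ord sumrMnl.
  rewrite -[(\sum_i _) *+ k]mulr_natl.
  by rewrite -mulr2n -[_ *+ 2]mulr_natr mulfK // pnatr_eq0.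
rewrite expr2 mulr_suml; apply: ler_sum => i _; rewrite mulr_sumr.
apply: ler_sum => j _.
have : 0 <= (x i - x j) ^+ 2 by rewrite sqr_ge0.
rewrite sqrrB; lra.
Qed.

Lemma sqnorm_mulmx_le k l (A : 'M[R]_(k, l)) :
  exists2 K, 0 < K & forall u : 'rV_k, sqnorm (u *m A) <= K * sqnorm u.
Proof.
pose c := \sum_i \sum_j A i j ^+ 2.
have Aij_le i j : A i j ^+ 2 <= c.
  rewrite /c (bigD1 i) //= (bigD1 j) //= -addrA lerDl.
  by rewrite addr_ge0 ?sumr_ge0 // => *; rewrite ?sumr_ge0 // => *; rewrite sqr_ge0.
have c_ge0 : 0 <= c by rewrite !sumr_ge0 // => *; rewrite sumr_ge0 // => *; rewrite sqr_ge0.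
exists (l%:R * k%:R * c + 1) => [|u]; first by rewrite ltr_pwDr // !mulr_ge0.
apply: (@le_trans _ _ (l%:R * k%:R * c * sqnorm u)); last first.
  by rewrite mulrDl mul1r lerDl sqnorm_ge0.
have -> : l%:R * k%:R * c * sqnorm u = \sum_(j < l) k%:R * \sum_i u 0 i ^+ 2 * c.
  by rewrite sumr_const card_ord -mulr_suml -sqnormE -mulr_natl; ring.
rewrite sqnormE; apply: ler_sum => j _; rewrite mxE.
apply: le_trans (sqr_sum_le _) _; rewrite ler_wpM2l // ?ler0n //.
by apply: ler_sum => i _; rewrite exprMn ler_wpM2l ?sqr_ge0 ?Aij_le.
Qed.

Lemma qformB k (S T : 'M[R]_k) w : qform (S - T) w = qform S w - qform T w.
Proof. by rewrite /qform mulmxBr mulmxBl !mxE. Qed.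

Lemma qform_scalar k (a : R) (w : 'rV[R]_k) : qform a%:M w = a * sqnorm w.
Proof. by rewrite /qform mul_mx_scalar -scalemxAl mxE. Qed.

Lemma qform_gram m k (G : 'M[R]_(m, k)) w : qform (G^T *m G) w = sqnorm (w *m G^T).
Proof. by rewrite /qform /sqnorm trmx_mul trmxK !mulmxA. Qed.

Lemma sqnorm_mul_diag_le k (d u : 'rV[R]_k) a :
  (forall i, `|d 0 i| <= a) -> sqnorm (u *m diag_mx d) <= a ^+ 2 * sqnorm u.
Proof.
move=> d_le; rewrite !sqnormE mulr_sumr; apply: ler_sum => i _.
rewrite mul_mx_diag mxE exprMn [a ^+ 2 * _]mulrC ler_wpM2l ?sqr_ge0 //.
by rewrite -(real_normK (num_real (d 0 i))) ler_sqr ?nnegrE // (le_trans _ (d_le i)).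
Qed.

Lemma sqnorm_mul_diag_ge k (d u : 'rV[R]_k) a : 0 <= a ->
  (forall i, a <= `|d 0 i|) -> a ^+ 2 * sqnorm u <= sqnorm (u *m diag_mx d).
Proof.
move=> a_ge0 d_ge; rewrite !sqnormE mulr_sumr; apply: ler_sum => i _.
rewrite mul_mx_diag mxE exprMn [a ^+ 2 * _]mulrC ler_wpM2l ?sqr_ge0 //.
by rewrite -(real_normK (num_real (d 0 i))) ler_sqr ?nnegrE // (le_trans a_ge0).
Qed.

Section SymmetricPSD.
Variables (k : nat) (T : 'M[R]_k).
Hypotheses (T_sym : T^T = T) (T_psd : forall w, 0 <= qform T w).

Lemma qform_subZ (w u : 'rV[R]_k) (t : R) :
  qform T (w - t *: u) = qform T w - 2 * t * (w *m T *m u^T) 0 0 + t ^+ 2 * qform T u.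
Proof.
have uTw : u *m T *m w^T = w *m T *m u^T.
  apply/matrixP => i j; rewrite !ord1.
  have -> : w *m T *m u^T = (u *m T *m w^T)^T by rewrite !trmx_mul trmxK T_sym mulmxA.
  by rewrite [RHS]mxE.
rewrite /qform; have -> : (w - t *: u)^T = w^T - t *: u^T by rewrite linearB linearZ.
rewrite !mulmxBl !mulmxBr -!scalemxAl -!scalemxAr uTw.
rewrite scalerA !mxE; ring.
Qed.

(* [T^2 <= K T] whenever [0 <= T <= K]: expand [0 <= qform T (w - K^-1 *: (w *m T))]. *)
Lemma sqnorm_mul_psd_le K (w : 'rV[R]_k) : 0 < K ->
  (forall u, qform T u <= K * sqnorm u) -> sqnorm (w *m T) <= K * qform T w.
Proof.
move=> K_gt0 T_le.
have := T_psd (w - K^-1 *: (w *m T)); rewrite qform_subZ.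
have -> : (w *m T *m (w *m T)^T) 0 0 = sqnorm (w *m T) by [].
have := T_le (w *m T).
set N := sqnorm (w *m T); set f := qform T w; set g := qform T (w *m T).
move=> g_le psd.
have gK : K^-1 ^+ 2 * g <= K^-1 * N.
  rewrite expr2 -mulrA ler_wpM2l ?invr_ge0 ?(ltW K_gt0) //.
  by rewrite mulrC ler_pdivrMr // mulrC.
have : 0 <= K * (f - K^-1 * N) by rewrite mulr_ge0 ?(ltW K_gt0) //; lra.
by rewrite mulrBr mulrA divff ?gt_eqF // mul1r; lra.
Qed.

Lemma qform_coercive : T \in unitmx ->
  exists2 c, 0 < c & forall w, c * sqnorm w <= qform T w.
Proof.
move=> T_unit.
have [K1 K1_gt0 T_le] := sqnorm_mulmx_le T.
have [K2 K2_gt0 Tinv_le] := sqnorm_mulmx_le (invmx T).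
pose K3 := (K1 + 1) / 2.
have K3_gt0 : 0 < K3 by rewrite divr_gt0 // ltr_wpDl // ltW.
have qT_le u : qform T u <= K3 * sqnorm u.
  apply: le_trans (mulmx_tr_le (u *m T) u) _.
  by have := T_le u; rewrite /K3; lra.
have K_gt0 : 0 < K2 * K3 by rewrite mulr_gt0.
exists (K2 * K3)^-1 => [|w]; first by rewrite invr_gt0.
rewrite -(ler_pM2l K_gt0) mulrA mulfV ?gt_eqF // mul1r -mulrA.
apply: le_trans (ler_wpM2l (ltW K2_gt0) (sqnorm_mul_psd_le w K3_gt0 qT_le)).
by have := Tinv_le (w *m T); rewrite -mulmxA mulmxV // mulmx1.
Qed.

Lemma psd_singular :
  (forall e, 0 < e -> exists2 w : 'rV_k, w != 0 & qform T w < e * sqnorm w) ->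
  exists2 v : 'rV_k, v != 0 & v *m T = 0.
Proof.
move=> small; case: (boolP (\det T == 0)) => [/det0P [v nz vT] | det_nz].
  by exists v.
have [|c c_gt0 coerc] := qform_coercive; first by rewrite unitmxE unitfE.
have [w w_nz] := small c c_gt0.
by rewrite ltNge coerc.
Qed.

End SymmetricPSD.
End QuadraticForms.

Lemma mxrank_full_colP (F : fieldType) m k (G : 'M[F]_(m, k)) :
  (forall h : 'I_k -> F, (forall i, \sum_j G i j * h j = 0) -> forall j, h j = 0)
  <-> \rank G = k.
Proof.
rewrite -mxrank_tr; split=> [G_inj | /eqP G_free h Gh0 j].
  apply/eqP; rewrite -/(row_free G^T) -kermx_eq0; apply/rowV0P => v /sub_kermxP vG0.
  apply/rowP => j; rewrite mxE; apply: G_inj => i.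
  have /rowP /(_ i) := vG0; rewrite !mxE => vG0i; rewrite -[RHS]vG0i.
  by apply: eq_bigr => j' _; rewrite mxE mulrC.
have : (\row_j h j) *m G^T == 0.
  apply/eqP/rowP => i; rewrite !mxE -[RHS](Gh0 i); apply: eq_bigr => j' _.
  by rewrite !mxE mulrC.
by rewrite mulmx_free_eq0 // => /eqP /rowP /(_ j); rewrite !mxE.
Qed.

Lemma mxrank_diag_scale (F : fieldType) m k (G : 'M[F]_(m, k)) (d : 'rV_m) (c : 'rV_k) :
  (forall i, d 0 i != 0) -> (forall j, c 0 j != 0) ->
  \rank (diag_mx d *m G *m diag_mx c) = \rank G.
Proof.
have diag_unit l (e : 'rV[F]_l) : (forall i, e 0 i != 0) -> diag_mx e \in unitmx.
  by move=> e_nz; rewrite unitmxE det_diag unitfE; apply/prodf_neq0.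
move=> d_nz c_nz; rewrite mxrankMfree ?row_free_unit ?diag_unit //.
by rewrite eqmxMfull // row_full_unit diag_unit.
Qed.

Section SingularValues.
Variables (R : realType) (m k : nat) (G : 'M[R]_(m, k)).
Hypothesis k_gt0 : (0 < k)%N.

Lemma gram_eigenvalueP a : eigenvalue (G^T *m G) a ->
  exists2 v : 'rV_k, v != 0 & sqnorm (v *m G^T) = a * sqnorm v.
Proof.
move=> /eigenvalueP [v vGG v_nz]; exists v => //.
by rewrite -qform_gram /qform vGG -scalemxAl mxE.
Qed.

Lemma gram_eigenvalue_ge0 a : eigenvalue (G^T *m G) a -> 0 <= a.
Proof.
move=> /gram_eigenvalueP [v v_nz vG].
by rewrite -(pmulr_lge0 _ (sqnorm_gt0 v_nz)) -vG sqnorm_ge0.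
Qed.

Let rayleigh := [set r : R | exists2 w : 'rV_k, w != 0 & r = sqnorm (w *m G^T) / sqnorm w].

Let rayleigh_n0 : rayleigh !=set0.
Proof.
pose e : 'rV[R]_k := const_mx 1.
have e_nz : e != 0.
  by apply/eqP => /rowP /(_ (Ordinal k_gt0)) /eqP; rewrite !mxE oner_eq0.
by exists (sqnorm (e *m G^T) / sqnorm e); exists e.
Qed.

(* The extreme Rayleigh quotients are eigenvalues: [psd_singular] applied to [G^T G] shifted by them. *)
Lemma gram_max_eigenvalue : exists2 l, eigenvalue (G^T *m G) l &
  forall v, sqnorm (v *m G^T) <= l * sqnorm v.
Proof.
have [K K_gt0 GT_le] := sqnorm_mulmx_le G^T.
have has_sup_r : has_sup rayleigh.
  split=> //; exists K => r [w w_nz ->].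
  by rewrite ler_pdivrMr ?sqnorm_gt0.
have sup_ge v : sqnorm (v *m G^T) <= sup rayleigh * sqnorm v.
  have [->|v_nz] := eqVneq v 0; first by rewrite /sqnorm !mul0mx mxE mulr0.
  rewrite -ler_pdivrMr ?sqnorm_gt0 //; apply: sup_upper_bound => //.
  by exists v.
have [|w|e e_gt0|v v_nz vS] := @psd_singular _ _ ((sup rayleigh)%:M - G^T *m G).
- by rewrite linearB /= tr_scalar_mx trmx_mul trmxK.
- by rewrite qformB qform_scalar qform_gram subr_ge0.
- have [r [w w_nz ->] r_gt] := sup_adherent e_gt0 has_sup_r.
  exists w => //; rewrite qformB qform_scalar qform_gram.
  by move: r_gt; rewrite ltr_pdivlMr ?sqnorm_gt0 // mulrBl; lra.
exists (sup rayleigh) => //; apply/eigenvalueP; exists v => //.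
by move: vS; rewrite mulmxBr mul_mx_scalar => /eqP; rewrite subr_eq0 => /eqP.
Qed.

Lemma gram_min_eigenvalue : exists2 l, eigenvalue (G^T *m G) l &
  forall v, l * sqnorm v <= sqnorm (v *m G^T).
Proof.
have has_inf_r : has_inf rayleigh.
  split=> //; exists 0 => r [w w_nz ->].
  by rewrite divr_ge0 ?sqnorm_ge0.
have inf_le v : inf rayleigh * sqnorm v <= sqnorm (v *m G^T).
  have [->|v_nz] := eqVneq v 0; first by rewrite /sqnorm !mul0mx mxE mulr0.
  rewrite -ler_pdivlMr ?sqnorm_gt0 //; apply: ge_inf; first by case: has_inf_r.
  by exists v.
have [|w|e e_gt0|v v_nz vS] := @psd_singular _ _ (G^T *m G - (inf rayleigh)%:M).
- by rewrite linearB /= tr_scalar_mx trmx_mul trmxK.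
- by rewrite qformB qform_scalar qform_gram subr_ge0.
- have [r [w w_nz ->] r_lt] := inf_adherent e_gt0 has_inf_r.
  exists w => //; rewrite qformB qform_scalar qform_gram.
  by move: r_lt; rewrite ltr_pdivrMr ?sqnorm_gt0 // mulrDl; lra.
exists (inf rayleigh) => //; apply/eigenvalueP; exists v => //.
by move: vS; rewrite mulmxBr mul_mx_scalar => /eqP; rewrite subr_eq0 => /eqP.
Qed.

Lemma sup_gram_eigenvalues l : eigenvalue (G^T *m G) l ->
  (forall v, sqnorm (v *m G^T) <= l * sqnorm v) ->
  sup [set a : R | eigenvalue (G^T *m G) a] = l.
Proof.
move=> el l_ge; have ub : ubound [set a : R | eigenvalue (G^T *m G) a] l.
  move=> a /= /gram_eigenvalueP [v v_nz vG].
  by rewrite -(ler_pM2r (sqnorm_gt0 v_nz)) -vG l_ge.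
apply/eqP; rewrite eq_le ge_sup //=; last by exists l.
by rewrite sup_upper_bound //; split; exists l.
Qed.

Lemma inf_gram_eigenvalues l : eigenvalue (G^T *m G) l ->
  (forall v, l * sqnorm v <= sqnorm (v *m G^T)) ->
  inf [set a : R | eigenvalue (G^T *m G) a] = l.
Proof.
move=> el l_le; have lb : lbound [set a : R | eigenvalue (G^T *m G) a] l.
  move=> a /= /gram_eigenvalueP [v v_nz vG].
  by rewrite -(ler_pM2r (sqnorm_gt0 v_nz)) -vG l_le.
apply/eqP; rewrite eq_le ge_inf //=; last by exists l.
by rewrite lb_le_inf //; exists l.
Qed.

Lemma sqnorm_le_sigma_max v : sqnorm (v *m G^T) <= sigma_max G ^+ 2 * sqnorm v.
Proof.
have [l el l_ge] := gram_max_eigenvalue.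
by rewrite /sigma_max (sup_gram_eigenvalues el l_ge) sqr_sqrtr ?(gram_eigenvalue_ge0 el).
Qed.

Lemma sigma_max_le b : 0 <= b ->
  (forall v, sqnorm (v *m G^T) <= b ^+ 2 * sqnorm v) -> sigma_max G <= b.
Proof.
move=> b_ge0 b_ge; have [l el l_ge] := gram_max_eigenvalue.
rewrite /sigma_max (sup_gram_eigenvalues el l_ge) -(ger0_norm b_ge0) -sqrtr_sqr.
have [v v_nz vG] := gram_eigenvalueP el.
by rewrite ler_wsqrtr // -(ler_pM2r (sqnorm_gt0 v_nz)) -vG b_ge.
Qed.

Lemma sigma_min_le_sqnorm v : sigma_min G ^+ 2 * sqnorm v <= sqnorm (v *m G^T).
Proof.
have [l el l_le] := gram_min_eigenvalue.
by rewrite /sigma_min (inf_gram_eigenvalues el l_le) sqr_sqrtr ?(gram_eigenvalue_ge0 el).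
Qed.

Lemma sigma_min_ge b : 0 <= b ->
  (forall v, b ^+ 2 * sqnorm v <= sqnorm (v *m G^T)) -> b <= sigma_min G.
Proof.
move=> b_ge0 b_le; have [l el l_le] := gram_min_eigenvalue.
rewrite /sigma_min (inf_gram_eigenvalues el l_le) -(ger0_norm b_ge0) -sqrtr_sqr.
have [v v_nz vG] := gram_eigenvalueP el.
by rewrite ler_wsqrtr // -(ler_pM2r (sqnorm_gt0 v_nz)) -vG b_le.
Qed.

Lemma sigma_min_gt0 : \rank G = k -> 0 < sigma_min G.
Proof.
rewrite -mxrank_tr => /eqP G_free; have [l el l_le] := gram_min_eigenvalue.
rewrite /sigma_min (inf_gram_eigenvalues el l_le) sqrtr_gt0.
have [v v_nz vG] := gram_eigenvalueP el.
rewrite -(pmulr_lgt0 _ (sqnorm_gt0 v_nz)) -vG sqnorm_gt0 //.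
by rewrite mulmx_free_eq0.
Qed.

End SingularValues.

Section DiagonalScaling.
Variables (R : realType) (m k : nat) (G : 'M[R]_(m, k)) (d : 'rV[R]_m) (c : 'rV[R]_k).
Hypothesis k_gt0 : (0 < k)%N.

Let mul_tr_scaled (v : 'rV[R]_k) :
  v *m (diag_mx d *m G *m diag_mx c)^T = v *m diag_mx c *m G^T *m diag_mx d.
Proof. by rewrite !trmx_mul !tr_diag_mx !mulmxA. Qed.

Lemma sigma_max_diag_scale a b : 0 <= a -> 0 <= b ->
  (forall i, `|d 0 i| <= a) -> (forall j, `|c 0 j| <= b) ->
  sigma_max (diag_mx d *m G *m diag_mx c) <= a * b * sigma_max G.
Proof.
move=> a_ge0 b_ge0 d_le c_le.
apply: sigma_max_le => // [|v]; first by rewrite !mulr_ge0 ?sqrtr_ge0.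
rewrite mul_tr_scaled; apply: le_trans (sqnorm_mul_diag_le _ d_le) _.
have -> : (a * b * sigma_max G) ^+ 2 * sqnorm v =
    a ^+ 2 * (sigma_max G ^+ 2 * (b ^+ 2 * sqnorm v)) by ring.
rewrite ler_wpM2l ?sqr_ge0 //; apply: le_trans (sqnorm_le_sigma_max G k_gt0 _) _.
by rewrite ler_wpM2l ?sqr_ge0 ?sqnorm_mul_diag_le.
Qed.

Lemma sigma_min_diag_scale a b : 0 <= a -> 0 <= b ->
  (forall i, a <= `|d 0 i|) -> (forall j, b <= `|c 0 j|) ->
  a * b * sigma_min G <= sigma_min (diag_mx d *m G *m diag_mx c).
Proof.
move=> a_ge0 b_ge0 d_ge c_ge.
apply: sigma_min_ge => // [|v]; first by rewrite !mulr_ge0 ?sqrtr_ge0.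
rewrite mul_tr_scaled; apply: le_trans (sqnorm_mul_diag_ge _ a_ge0 d_ge).
have -> : (a * b * sigma_min G) ^+ 2 * sqnorm v =
    a ^+ 2 * (sigma_min G ^+ 2 * (b ^+ 2 * sqnorm v)) by ring.
rewrite ler_wpM2l ?sqr_ge0 //; apply: le_trans (sigma_min_le_sqnorm G k_gt0 _).
by rewrite ler_wpM2l ?sqr_ge0 ?sqnorm_mul_diag_ge.
Qed.

Lemma cond_number_diag_scale_le alo ahi blo bhi : \rank G = k ->
  0 < alo -> 0 < blo ->
  (forall i, alo <= `|d 0 i| <= ahi) -> (forall j, blo <= `|c 0 j| <= bhi) ->
  cond_number (diag_mx d *m G *m diag_mx c) <= ahi / alo * (bhi / blo) * cond_number G.
Proof.
move=> G_rank alo_gt0 blo_gt0 d_b c_b.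
have d_lo i : alo <= `|d 0 i| by case/andP: (d_b i).
have d_hi i : `|d 0 i| <= ahi by case/andP: (d_b i).
have c_lo j : blo <= `|c 0 j| by case/andP: (c_b j).
have c_hi j : `|c 0 j| <= bhi by case/andP: (c_b j).
have m_gt0 : (0 < m)%N by rewrite (leq_trans k_gt0) // -G_rank rank_leq_row.
have ahi_ge0 : 0 <= ahi by apply: le_trans (d_hi (Ordinal m_gt0)).
have bhi_ge0 : 0 <= bhi by apply: le_trans (c_hi (Ordinal k_gt0)).
have smax := sigma_max_diag_scale ahi_ge0 bhi_ge0 d_hi c_hi.
have smin := sigma_min_diag_scale (ltW alo_gt0) (ltW blo_gt0) d_lo c_lo.
have smin_gt0 := sigma_min_gt0 k_gt0 G_rank.
have smin'_gt0 := lt_le_trans (mulr_gt0 (mulr_gt0 alo_gt0 blo_gt0) smin_gt0) smin.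
rewrite /cond_number ler_pdivrMr //; apply: le_trans smax _.
apply: le_trans (ler_wpM2l _ smin); last by rewrite !mulr_ge0 ?invr_ge0 ?sqrtr_ge0 // ltW.
by rewrite le_eqVlt; apply/orP; left; apply/eqP; field; rewrite !gt_eqF.
Qed.

End DiagonalScaling.

Section Model.
Variables (R : realType) (n M : nat) (p : 'I_n -> 'I_M -> bool -> R).

Lemma completeness_rank : completeness p <-> \rank (Bmat p) = M.
Proof.
rewrite -mxrank_full_colP /completeness /condE.
have condE_B h f : \sum_y h y * (p f y true / pFR1 p f) = \sum_y Bmat p f y * h y.
  by apply: eq_bigr => y _; rewrite mxE mulrC.
by split=> compl h h0; apply: compl => f; rewrite ?condE_B // -condE_B.
Qed.

Lemma pmf_dim_gt0 : is_pmf p -> (0 < M)%N.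
Proof.
case=> _ sum1; rewrite lt0n; apply/eqP => M0; move: sum1.
rewrite big1 => [/eqP|f _]; first by rewrite eq_sym oner_eq0.
by apply: big1 => -[y y_lt]; exfalso; rewrite M0 in y_lt.
Qed.

Lemma pY_neq0 y : 0 < piR p y -> pY p y != 0.
Proof. by rewrite /piR; apply: contraTneq => ->; rewrite invr0 mulr0 ltxx. Qed.

(* Conditional independence gives [P(F=f, Y=y, R=1) = P(F=f, Y=y) pi(y)]. *)
Lemma Bmat_diag_scale : cond_indep_F_R_given_Y p -> (forall y, pY p y != 0) ->
  Bmat p = diag_mx (\row_f (pFR1 p f)^-1) *m Hmat p *m diag_mx (\row_y piR p y).
Proof.
move=> indep pY_nz; apply/matrixP => f y.
rewrite mul_mx_diag mul_diag_mx !mxE -[p f y true](mulfK (pY_nz y)) indep /piR.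
by rewrite mulrC !mulrA.
Qed.

End Model.

Theorem proposition3 (R : realType) (n M : nat)
    (p : 'I_n -> 'I_M -> bool -> R) :
  is_pmf p ->
  (forall f, 0 < pFR1 p f) ->
  (completeness p <-> \rank (Bmat p) = M) /\
  (forall pi_lo pi_hi pF_lo pF_hi : R,
     cond_indep_F_R_given_Y p ->
     (forall y, pi_lo <= piR p y <= pi_hi) ->
     (forall f, pF_lo <= pFR1 p f <= pF_hi) ->
     0 < pi_lo -> 0 < pF_lo ->
     (completeness p <-> \rank (Hmat p) = M) /\
     (completeness p ->
        cond_number (Bmat p) <=
          (pF_hi / pF_lo) * (pi_hi / pi_lo) * cond_number (Hmat p))).
Proof.
move=> pmf pF_gt0; split=> [|pi_lo pi_hi pF_lo pF_hi indep pi_b pF_b pi_lo_gt0 pF_lo_gt0].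
  exact: completeness_rank.
have pi_gt0 y : 0 < piR p y by case/andP: (pi_b y) => /(lt_le_trans pi_lo_gt0).
have BDH := Bmat_diag_scale indep (fun y => pY_neq0 (pi_gt0 y)).
have rankBH : \rank (Bmat p) = \rank (Hmat p).
  by rewrite BDH mxrank_diag_scale // => [f|y]; rewrite mxE ?invr_eq0 gt_eqF.
rewrite completeness_rank rankBH; split=> // rankH; rewrite BDH.
have M_gt0 := pmf_dim_gt0 pmf.
have n_gt0 : (0 < n)%N by rewrite (leq_trans M_gt0) // -rankH rank_leq_row.
have pF_hi_gt0 : 0 < pF_hi.
  by case/andP: (pF_b (Ordinal n_gt0)) => _; apply: lt_le_trans.
have -> : pF_hi / pF_lo = pF_lo^-1 / pF_hi^-1 by rewrite invrK mulrC.
apply: cond_number_diag_scale_le => //.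
- by rewrite invr_gt0.
- move=> f; rewrite mxE ger0_norm ?invr_ge0 ?(ltW (pF_gt0 f)) //.
  by rewrite !lef_pV2 ?posrE ?pF_gt0 // andbC.
- by move=> y; rewrite mxE ger0_norm ?(ltW (pi_gt0 y)) ?pi_b.
Qed.
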